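(* Let $X$ be a finite set, $k$ an integer with $1\le k\le|X|-1$, $\mathfrak{C}$ a nonempty symmetric family of choice functions for $\binom{X}{k}$, and $\mathcal{F}$ the set of (not necessarily simple) averaging functions for $\mathfrak{C}$. Suppose that for some $r\in\{3,\dots,k\}$ the following holds: for every $Y\in\binom{X}{k}$ and every one-to-one $\bar a\in Y^r$ there is $f\in\mathcal{F}_{[r]}$ with $f_Y(\bar a)=a_2$ and $f_Z(\bar b)=b_1$ for every $Z\in\binom{X}{k}$ with $Z\ne Y$ and every $\bar b\in Z^r$. Then $\mathfrak{C}$ is full, i.e. every choice function for $\binom{X}{k}$ belongs to $\mathfrak{C}$.
   Context: $\binom{X}{k}=\{Y\subseteq X:|Y|=k\}$; choice functions satisfy $c(Y)\in Y$. Symmetric: for every permutation $\pi$ of $X$ and $c\in\mathfrak{C}$, $(\pi*c)(Y)=\pi^{-1}(c(\pi(Y)))$ is in $\mathfrak{C}$. $\mathcal{F}_{[r]}$ is the set of families $f=\langle f_Y:Y\in\binom{X}{k}\rangle$ with $f_Y:Y^r\to Y$, $f_Y(x_1,\dots,x_r)\in\{x_1,\dots,x_r\}$, such that for all $c_1,\dots,c_r\in\mathfrak{C}$ the function $Y\mapsto f_Y(c_1(Y),\dots,c_r(Y))$ is in $\mathfrak{C}$. Standing assumption: every $f\in\mathcal{F}$ that is simple (i.e. $f_Y$ is the restriction to $Y^r$ of a single function independent of $Y$) is a monarchy (for some $t$, $f_Y(\bar x)=x_t$ for all $Y,\bar x$). *)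

From HB Require Import structures.
From mathcomp Require Import all_boot all_fingroup.
Set Implicit Arguments. Unset Strict Implicit. Unset Printing Implicit Defensive.
Import GroupScope.

Section Defs.
Variables (X : finType) (k : nat).

Definition ksub := {Y : {set X} | #|Y| == k}.

Definition is_choice (c : {ffun ksub -> X}) : Prop := forall Y : ksub, c Y \in val Y.

Lemma pimg_card (p : {perm X}) (Y : ksub) : #|p @: val Y| == k.
Proof. by rewrite card_imset ?(valP Y) //; exact: perm_inj. Qed.

Definition pimg (p : {perm X}) (Y : ksub) : ksub := exist _ (p @: val Y) (pimg_card p Y).

Definition pact (p : {perm X}) (c : {ffun ksub -> X}) : {ffun ksub -> X} :=
  [ffun Y => (p^-1) (c (pimg p Y))].

Definition symmetric_family (C : {set {ffun ksub -> X}}) : Prop :=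
  forall (p : {perm X}) c, c \in C -> pact p c \in C.

Definition in_pow (n : nat) (Y : ksub) (xs : n.-tuple X) : Prop :=
  forall i : 'I_n, tnth xs i \in val Y.

(* f in F_[n]: f = <f_Y : Y in binom(X,k)>, f_Y : Y^n -> Y (only values on Y^n matter) *)
Definition averaging (C : {set {ffun ksub -> X}}) (n : nat)
    (f : ksub -> n.-tuple X -> X) : Prop :=
  (forall Y xs, in_pow Y xs -> f Y xs \in (xs : seq X)) /\
  (forall cs : 'I_n -> {ffun ksub -> X}, (forall i, cs i \in C) ->
     [ffun Y => f Y [tuple cs i Y | i < n]] \in C).

Definition simple (n : nat) (f : ksub -> n.-tuple X -> X) : Prop :=
  exists g : n.-tuple X -> X, forall Y xs, in_pow Y xs -> f Y xs = g xs.

Definition monarchy (n : nat) (f : ksub -> n.-tuple X -> X) : Prop :=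
  exists t : 'I_n, forall Y xs, in_pow Y xs -> f Y xs = tnth xs t.

Definition full (C : {set {ffun ksub -> X}}) : Prop :=
  forall c, is_choice c -> c \in C.

End Defs.

From mathcomp Require Import all_boot all_fingroup.
Set Implicit Arguments. Unset Strict Implicit. Unset Printing Implicit Defensive.

(* The hypothesis makes [C] closed under changing a single value: to move [c]
   to [x] at [Y], list [Y] as [(c Y, x, ...)], and feed the averaging function
   [f] the conjugates of [c] by the transpositions [(c Y, a_i)].  They all fix
   [Y], so at [Y] they read off the list and [f] picks its second entry [x];
   elsewhere [f] picks the first one, the unchanged [c].  Every choice function
   is reached from any member of [C] by finitely many such changes. *)

Section ChoiceFunctions.
Variables (X : finType) (k : nat).

Definition ffun_upd (c : {ffun ksub X k -> X}) (Y : ksub X k) (x : X) :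
    {ffun ksub X k -> X} :=
  [ffun Z => if Z == Y then x else c Z].

Lemma ffun_upd_id (c : {ffun ksub X k -> X}) (Y : ksub X k) :
  ffun_upd c Y (c Y) = c.
Proof. by apply/ffunP => Z; rewrite ffunE; case: eqP => // ->. Qed.

Lemma pimg1 (Y : ksub X k) : pimg 1 Y = Y.
Proof.
by apply: val_inj; rewrite /= (eq_imset _ (perm1 (T := X))) imset_id.
Qed.

Lemma pact1 (c : {ffun ksub X k -> X}) : pact 1 c = c.
Proof. by apply/ffunP => Y; rewrite ffunE pimg1 invg1 perm1. Qed.

Lemma pimg_tperm (Y : ksub X k) (a b : X) :
  a \in val Y -> b \in val Y -> pimg (tperm a b) Y = Y.
Proof.
move=> aY bY; apply: val_inj => /=.
apply/eqP; rewrite eqEcard card_imset; last exact: perm_inj.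
rewrite leqnn andbT; apply/subsetP => _ /imsetP [y yY ->].
by case: tpermP => // ->.
Qed.

Lemma pact_tperm_at (c : {ffun ksub X k -> X}) (Y : ksub X k) (b : X) :
  c Y \in val Y -> b \in val Y -> pact (tperm (c Y) b) c Y = b.
Proof. by move=> cY bY; rewrite ffunE pimg_tperm // tpermV tpermL. Qed.

Lemma subset_in_pow (n : nat) (Y : ksub X k) (xs : n.-tuple X) :
  {subset xs <= val Y} -> in_pow Y xs.
Proof. by move=> sub i; apply: sub; exact: mem_tnth. Qed.

Lemma exists_uniq_tuple_head2 (Y : {set X}) (y0 x : X) (n : nat) :
  y0 \in Y -> x \in Y -> y0 != x -> 1 < n <= #|Y| ->
  exists a : n.-tuple X,
    [/\ {subset a <= Y}, uniq a, nth y0 a 0 = y0 & nth y0 a 1 = x].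
Proof.
move=> y0Y xY y0x /andP[n_gt1 leYn].
pose s := y0 :: x :: enum (Y :\ y0 :\ x).
have size_s : size s = #|Y|.
  by rewrite (cardsD1 y0) (cardsD1 x) y0Y !inE eq_sym y0x xY /= cardE.
have size_take : size (take n s) == n by rewrite size_takel ?size_s.
exists (Tuple size_take); split => /=.
- move=> z /mem_take; rewrite !inE mem_enum !inE.
  by case/or3P => [/eqP->|/eqP->|/and3P[]].
- apply: take_uniq.
  by rewrite /= !inE !mem_enum !inE (negPf y0x) !eqxx andbF enum_uniq.
- by case: n {n_gt1 leYn size_take}.
- by case: n n_gt1 {leYn size_take} => // -[].
Qed.

Lemma full_of_upd_closed (C : {set {ffun ksub X k -> X}}) :
  (forall c (Y : ksub X k) x, c \in C -> x \in val Y -> ffun_upd c Y x \in C) ->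
  (exists c, c \in C) -> full C.
Proof.
move=> updC [c cC] d dchoice.
pose upds := foldr (fun Y e => ffun_upd e Y (d Y)) c.
have upds_at s Z : upds s Z = if Z \in s then d Z else c Z.
  elim: s => //= Y s IH; rewrite ffunE inE IH.
  by case: (eqVneq Z Y) => [->|].
have -> : d = upds (enum [set: ksub X k]).
  by apply/ffunP => Z; rewrite upds_at mem_enum in_setT.
by elim: (enum _) => //= Y s IH; exact: updC.
Qed.

Section UpdateClosure.
Variables (C : {set {ffun ksub X k -> X}}) (r : nat).
Hypothesis (choiceC : forall c, c \in C -> is_choice c).
Hypothesis (symC : symmetric_family C).
Hypotheses (r_gt1 : 1 < r) (r_le_k : r <= k).
Hypothesis (switchC :
    forall (Y : ksub X k) (a : r.-tuple X), in_pow Y a -> uniq a ->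
      exists f : ksub X k -> r.-tuple X -> X,
        averaging C f /\
        (forall i : 'I_r, val i = 1 -> f Y a = tnth a i) /\
        (forall Z : ksub X k, Z <> Y -> forall b : r.-tuple X, in_pow Z b ->
           forall i : 'I_r, val i = 0 -> f Z b = tnth b i)).

Lemma ffun_upd_in (c : {ffun ksub X k -> X}) (Y : ksub X k) (x : X) :
  c \in C -> x \in val Y -> ffun_upd c Y x \in C.
Proof.
move=> cC xY; have cYY : c Y \in val Y := choiceC cC Y.
have [<-|cYx] := eqVneq (c Y) x; first by rewrite ffun_upd_id.
have [|a [aY a_uniq a0 a1]] := exists_uniq_tuple_head2 cYY xY cYx (n := r).
  by rewrite r_gt1 (eqP (valP Y)).
have [f [[_ avgC] [fY fZ]]] := switchC (subset_in_pow aY) a_uniq.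
pose cs i := pact (tperm (c Y) (tnth a i)) c.
have csC i : cs i \in C by exact: symC.
have csY : [tuple cs i Y | i < r] = a.
  apply: eq_from_tnth => i.
  by rewrite tnth_mktuple pact_tperm_at ?(subset_in_pow aY).
suff -> : ffun_upd c Y x = [ffun Z => f Z [tuple cs i Z | i < r]].
  exact: avgC.
apply/ffunP => Z; rewrite !ffunE; have [->|/eqP ZY] := eqVneq Z Y.
  by rewrite csY (fY (Ordinal r_gt1)) // (tnth_nth (c Y)).
have r_gt0 : 0 < r by exact: ltnW.
rewrite (fZ Z ZY _ _ (Ordinal r_gt0)) // ?tnth_mktuple.
  by rewrite /cs (tnth_nth (c Y)) a0 tperm1 pact1.
by move=> i; rewrite tnth_mktuple; exact: choiceC.
Qed.

End UpdateClosure.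
End ChoiceFunctions.

Theorem claim14p4 (X : finType) (k : nat) (C : {set {ffun ksub X k -> X}})
  (hk1 : 1 <= k) (hkX : k <= #|X| - 1)
  (hCchoice : forall c, c \in C -> is_choice c)
  (hCne : exists c, c \in C)
  (hCsym : symmetric_family C)
  (hstand : forall (n : nat) (f : ksub X k -> n.-tuple X -> X),
      averaging C f -> simple f -> monarchy f)
  (r : nat) (hr3 : 3 <= r) (hrk : r <= k)
  (hyp : forall (Y : ksub X k) (a : r.-tuple X), in_pow Y a -> uniq a ->
      exists f : ksub X k -> r.-tuple X -> X,
        averaging C f /\
        (forall i : 'I_r, val i = 1 -> f Y a = tnth a i) /\
        (forall Z : ksub X k, Z <> Y -> forall b : r.-tuple X, in_pow Z b ->
           forall i : 'I_r, val i = 0 -> f Z b = tnth b i)) :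
  full C.
Proof.
apply: full_of_upd_closed hCne => c Y x.
exact: (ffun_upd_in hCchoice hCsym (ltnW hr3) hrk hyp).
Qed.
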